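(* Let $k_1,k_2\ge1$ and $n=2^{k_1k_2}-1$. Suppose $n=n_1n_2$ with $n_1,n_2>1$ relatively prime, and let $\mathcal A=\{0,\dots,n_1-1\}\times\{0,\dots,n_2-1\}$. Let $\Lambda\subseteq\mathbb Z^2$ be a lattice that induces a lattice tiling of $\mathcal A$ and also of a shape $\mathcal S$ (necessarily $|\mathcal S|=n$). Let $\delta$ be a nonzero ternary vector such that $(\Lambda,\mathcal S,\delta)$ defines a folding. Let $s_0s_1\cdots s_{n-1}$ be an m-sequence (a binary maximal-length linear shift register sequence) of period $n$. Fold it into $\mathcal S$ by $\delta$: with folded-row $p_0,p_1,\dots$ of $(\Lambda,\mathcal S,\delta)$, write $s_i$ at $p_i$ for $0\le i<n$. Likewise fold it into $\mathcal A$ by $\delta$ using the folded-row of $(\Lambda,\mathcal A,\delta)$. Then the folded shape $\mathcal S$ has the $k_1\times k_2$ window property if and only if the folded array $\mathcal A$ has the $k_1\times k_2$ window property.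
   Context: A shape is a finite nonempty set $\mathcal S\subset\mathbb Z^2$ containing the origin. A lattice is $\Lambda=\{u_1v_1+u_2v_2:u_i\in\mathbb Z\}$ for linearly independent $v_1,v_2\in\mathbb Z^2$. $\Lambda$ induces a lattice tiling of $\mathcal S$ if the translates $\mathcal S+\lambda$, $\lambda\in\Lambda$, are pairwise disjoint and cover $\mathbb Z^2$. Then $c(x)$ denotes the unique $\lambda\in\Lambda$ with $x\in\mathcal S+\lambda$. For a nonzero $\delta\in\{-1,0,1\}^2$, the folded-row is $p_0=0$, $p_{k+1}=(p_k+\delta)-c(p_k+\delta)$. $(\Lambda,\mathcal S,\delta)$ defines a folding if every point of $\mathcal S$ occurs in the folded-row. When a sequence $s_0\cdots s_{n-1}$ with $n=|\mathcal S|$ is folded into $\mathcal S$, the resulting array is extended periodically to $f:\mathbb Z^2\to\{0,1\}$ by $f(p_i+\lambda)=s_i$ for $0\le i<n$ and $\lambda\in\Lambda$ (i.e. every copy $\mathcal S+\lambda$ repeats the contents of $\mathcal S$). The folded shape has the $k_1\times k_2$ window property if every nonzero binary $k_1\times k_2$ matrix $M$ occurs exactly once as a window, i.e. there is exactly one $x\in\mathcal S$ with $f(x+(r,c))=M_{r,c}$ for all $0\le r<k_1$, $0\le c<k_2$. *)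

From Stdlib Require Import ZArith Arith List Bool.
Open Scope Z_scope.

Definition pt := (Z * Z)%type.
Definition padd (x y : pt) : pt := (fst x + fst y, snd x + snd y).
Definition psub (x y : pt) : pt := (fst x - fst y, snd x - snd y).

Definition in_lattice (v1 v2 : pt) (x : pt) : Prop :=
  exists u1 u2 : Z, x = (u1 * fst v1 + u2 * fst v2, u1 * snd v1 + u2 * snd v2).

Definition lin_indep (v1 v2 : pt) : Prop :=
  fst v1 * snd v2 - snd v1 * fst v2 <> 0.

Definition is_shape (S : pt -> Prop) : Prop :=
  (exists l : list pt, forall x, S x <-> In x l) /\ S (0, 0).

Definition lattice_tiling (v1 v2 : pt) (S : pt -> Prop) : Prop :=
  (forall l1 l2 x, in_lattice v1 v2 l1 -> in_lattice v1 v2 l2 ->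
     S (psub x l1) -> S (psub x l2) -> l1 = l2) /\
  (forall x, exists l, in_lattice v1 v2 l /\ S (psub x l)).

Definition ternary_nonzero (d : pt) : Prop :=
  -1 <= fst d <= 1 /\ -1 <= snd d <= 1 /\ d <> (0, 0).

(* p is the folded-row of (Lambda, S, delta):
   p_0 = 0, p_{k+1} = (p_k + delta) - c(p_k + delta), where c(y) is the
   (unique, by tiling) lattice point with y in S + c(y). *)
Definition folded_row (v1 v2 : pt) (S : pt -> Prop) (d : pt) (p : nat -> pt) : Prop :=
  p 0%nat = (0, 0) /\
  forall k : nat, exists l, in_lattice v1 v2 l /\ S (psub (padd (p k) d) l) /\
     p (Datatypes.S k) = psub (padd (p k) d) l.

Definition defines_folding (v1 v2 : pt) (S : pt -> Prop) (d : pt) : Prop :=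
  forall p, folded_row v1 v2 S d p -> forall x, S x -> exists k, p k = x.

Definition folded_array (v1 v2 : pt) (p : nat -> pt) (n : nat) (s : nat -> bool)
  (f : pt -> bool) : Prop :=
  forall i l, (i < n)%nat -> in_lattice v1 v2 l -> f (padd (p i) l) = s i.

Definition window_property (k1 k2 : nat) (S : pt -> Prop) (f : pt -> bool) : Prop :=
  forall M : nat -> nat -> bool,
    (exists r c, (r < k1)%nat /\ (c < k2)%nat /\ M r c = true) ->
    exists! x, S x /\
      forall r c, (r < k1)%nat -> (c < k2)%nat ->
        f (padd x (Z.of_nat r, Z.of_nat c)) = M r c.

Fixpoint lfsr_sum (c s : nat -> bool) (i k j : nat) : bool :=
  match j with
  | O => false
  | Datatypes.S j' => xorb (lfsr_sum c s i k j') (c j && s (i + k - j)%nat)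
  end.

Definition lfsr_sequence (k : nat) (s : nat -> bool) : Prop :=
  exists c : nat -> bool, forall i, s (i + k)%nat = lfsr_sum c s i k k.

Definition least_period (n : nat) (s : nat -> bool) : Prop :=
  (0 < n)%nat /\ (forall i, s (i + n)%nat = s i) /\
  (forall m, (0 < m < n)%nat -> ~ (forall i, s (i + m)%nat = s i)).

Definition m_sequence (k : nat) (s : nat -> bool) : Prop :=
  lfsr_sequence k s /\ least_period (2 ^ k - 1)%nat s.

Definition rect (n1 n2 : nat) (x : pt) : Prop :=
  0 <= fst x < Z.of_nat n1 /\ 0 <= snd x < Z.of_nat n2.

From Stdlib Require Import ZArith Arith List Bool Lia Permutation ClassicalEpsilon.

(* Both folded arrays are one and the same Lambda-periodic colouring of Z^2,
   read through two different fundamental domains S and A of Lambda.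

   Write x == y when x - y lies in Lambda.  A folded row satisfies
   p_k == k*delta.  If a tile T of Lambda has |T| = N points, then
   N*delta lies in Lambda: summing the tile map a |-> (a+delta) mod Lambda
   over T permutes T, so the sum of the lattice corrections, which equals
   N*delta, is a lattice vector.  Applied to the rectangle A (|A| = n1 n2 = n)
   this makes every folded row n-periodic, so p^S_k and p^A_k are congruent
   to the same point k*delta with 0 <= k < n, and the folded arrays
   therefore take the same value on every congruence class.  Finally the
   window property only depends on the periodic colouring, not on the tile
   used to count window positions, since the tiles S and A are both systems
   of representatives of Z^2 / Lambda. *)

Lemma pt_ext (a b : pt) : fst a = fst b -> snd a = snd b -> a = b.
Proof. destruct a, b; simpl; intros; subst; reflexivity. Qed.

Ltac ptring := apply pt_ext; unfold padd, psub; cbn [fst snd]; ring.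

Definition pscale (z : Z) (x : pt) : pt := (z * fst x, z * snd x).

Section Lattice.
Variables v1 v2 : pt.
Notation L := (in_lattice v1 v2).

Definition congr (x y : pt) : Prop := L (psub x y).

Lemma lat0 : L (0, 0).
Proof. exists 0, 0. ptring. Qed.

Lemma latD x y : L x -> L y -> L (padd x y).
Proof. intros [a [b ->]] [c [e ->]]. exists (a + c), (b + e). ptring. Qed.

Lemma latB x y : L x -> L y -> L (psub x y).
Proof. intros [a [b ->]] [c [e ->]]. exists (a - c), (b - e). ptring. Qed.

Lemma latZ z x : L x -> L (pscale z x).
Proof. intros [a [b ->]]. exists (z * a), (z * b). unfold pscale. ptring. Qed.

Lemma congr_refl x : congr x x.
Proof. unfold congr. replace (psub x x) with ((0, 0) : pt) by ptring. apply lat0. Qed.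

Lemma congr_sym x y : congr x y -> congr y x.
Proof.
  unfold congr; intro H. replace (psub y x) with (psub (0, 0) (psub x y)) by ptring.
  apply latB; [apply lat0 | exact H].
Qed.

Lemma congr_trans x y z : congr x y -> congr y z -> congr x z.
Proof.
  unfold congr; intros H1 H2. replace (psub x z) with (padd (psub x y) (psub y z)) by ptring.
  now apply latD.
Qed.

Lemma congr_padd x y a : congr x y -> congr (padd x a) (padd y a).
Proof. unfold congr. now replace (psub (padd x a) (padd y a)) with (psub x y) by ptring. Qed.

Lemma congr_sub_lat x l : L l -> congr x (psub x l).
Proof. unfold congr. now replace (psub x (psub x l)) with l by ptring. Qed.

Section Tile.
Variable A : pt -> Prop.
Hypothesis htile : lattice_tiling v1 v2 A.

Lemma tile_uniq a b : A a -> A b -> congr a b -> a = b.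
Proof.
  destruct htile as [hu _]; intros Ha Hb Hab.
  assert (E : (0, 0) = psub a b).
  { apply (hu (0, 0) (psub a b) a lat0 Hab).
    - now replace (psub a (0, 0)) with a by ptring.
    - now replace (psub a (psub a b)) with b by ptring. }
  apply pt_ext; [apply (f_equal fst) in E | apply (f_equal snd) in E];
    unfold psub in E; simpl in E; lia.
Qed.

Lemma tile_rep x : exists a, A a /\ congr x a.
Proof.
  destruct (proj2 htile x) as [l [Ll Ax]].
  exists (psub x l). split; [exact Ax | now apply congr_sub_lat].
Qed.

Lemma tile_reduction : exists red : pt -> pt, forall x, A (red x) /\ congr x (red x).
Proof.
  exists (fun x => proj1_sig (constructive_indefinite_description _ (tile_rep x))).
  intro x. exact (proj2_sig (constructive_indefinite_description _ (tile_rep x))).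
Qed.

End Tile.

Definition psum (l : list pt) : pt := fold_right padd (0, 0) l.

Lemma psum_perm l l' : Permutation l l' -> psum l = psum l'.
Proof.
  induction 1; simpl; [reflexivity | now rewrite IHPermutation | ptring | congruence].
Qed.

Lemma psum_congr {X : Type} (f g : X -> pt) (l : list X) :
  (forall a, In a l -> congr (f a) (g a)) ->
  congr (psum (map f l)) (psum (map g l)).
Proof.
  unfold congr; induction l as [|a l IH]; simpl; intros H.
  - apply congr_refl.
  - replace (psub (padd (f a) (psum (map f l))) (padd (g a) (psum (map g l))))
      with (padd (psub (f a) (g a)) (psub (psum (map f l)) (psum (map g l)))) by ptring.
    apply latD; auto.
Qed.

Lemma psum_shift (l : list pt) (d : pt) :
  psum (map (fun a => padd a d) l) = padd (psum l) (pscale (Z.of_nat (length l)) d).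
Proof.
  induction l as [|a l IH]; unfold psum, pscale in *; cbn [map fold_right length].
  - ptring.
  - rewrite IH, Nat2Z.inj_succ. ptring.
Qed.

(* If a tile has exactly N points then N*d is a lattice vector, for every d:
   the map a |-> (a + d) mod Lambda permutes the tile, and comparing the sum
   of its values with the sum of the a + d gives N*d == 0. *)
Lemma tile_size_period (A : pt -> Prop) (T : list pt) (d : pt) :
  lattice_tiling v1 v2 A -> (forall x, A x <-> In x T) -> NoDup T ->
  L (pscale (Z.of_nat (length T)) d).
Proof.
  intros ht hT hnd.
  destruct (tile_reduction A ht) as [red hred].
  set (step := fun a => red (padd a d)).
  assert (Hperm : Permutation (map step T) T).
  { apply Permutation_map_same_l.
    - apply FinFun.Injective_map_NoDup_in; [|exact hnd].
      intros a b Ha Hb E. apply (tile_uniq A ht); [apply hT; auto | apply hT; auto|].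
      assert (Hab : congr (padd a d) (padd b d)).
      { apply (congr_trans _ (step a)); [apply hred|].
        rewrite E. apply congr_sym, hred. }
      apply (congr_padd _ _ (pscale (-1) d)) in Hab.
      replace (padd (padd a d) (pscale (-1) d)) with a in Hab by (unfold pscale; ptring).
      now replace (padd (padd b d) (pscale (-1) d)) with b in Hab by (unfold pscale; ptring).
    - intros y Hy. apply in_map_iff in Hy as [a [<- _]]. apply hT, hred. }
  assert (Hsum : congr (psum (map (fun a => padd a d) T)) (psum (map step T)))
    by (apply psum_congr; intros a _; apply hred).
  rewrite psum_shift, (psum_perm _ _ Hperm) in Hsum.
  unfold congr in Hsum.
  now replace (psub (padd (psum T) (pscale (Z.of_nat (length T)) d)) (psum T))
    with (pscale (Z.of_nat (length T)) d) in Hsum by ptring.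
Qed.

Section FoldedRow.
Variables (B : pt -> Prop) (d : pt) (p : nat -> pt).
Hypothesis hrow : folded_row v1 v2 B d p.

Lemma row_congr k : congr (p k) (pscale (Z.of_nat k) d).
Proof.
  destruct hrow as [h0 hs]. induction k as [|k IH].
  - rewrite h0. unfold congr, pscale.
    replace (psub (0, 0) _) with ((0, 0) : pt) by ptring. apply lat0.
  - destruct (hs k) as [l [Ll [_ E]]]. rewrite E.
    apply (congr_trans _ (padd (p k) d)); [now apply congr_sym, congr_sub_lat|].
    apply (congr_padd _ _ d) in IH.
    replace (pscale (Z.of_nat (S k)) d) with (padd (pscale (Z.of_nat k) d) d)
      by (unfold pscale; rewrite Nat2Z.inj_succ; ptring).
    exact IH.
Qed.

Lemma row_in k : B (0, 0) -> B (p k).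
Proof.
  destruct hrow as [h0 hs]; intro H0. destruct k as [|k]; [now rewrite h0|].
  destruct (hs k) as [l [_ [HB E]]]. now rewrite E.
Qed.

Lemma row_mod N : lattice_tiling v1 v2 B -> B (0, 0) -> (0 < N)%nat ->
  L (pscale (Z.of_nat N) d) -> forall k, p (k mod N) = p k.
Proof.
  intros ht H0 hN HNd k.
  apply (tile_uniq B ht); try apply row_in; auto.
  apply (congr_trans _ _ _ (row_congr _)), congr_sym, (congr_trans _ _ _ (row_congr _)).
  assert (Hk : Z.of_nat k = Z.of_nat (k / N) * Z.of_nat N + Z.of_nat (k mod N))
    by (pose proof (Nat.div_mod_eq k N); lia).
  unfold congr. rewrite Hk.
  replace (psub (pscale (Z.of_nat (k / N) * Z.of_nat N + Z.of_nat (k mod N)) d)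
                (pscale (Z.of_nat (k mod N)) d))
    with (pscale (Z.of_nat (k / N)) (pscale (Z.of_nat N) d)) by (unfold pscale; ptring).
  now apply latZ.
Qed.

End FoldedRow.

Lemma folded_array_at p n s f i z :
  folded_array v1 v2 p n s f -> (i < n)%nat -> congr z (p i) -> f z = s i.
Proof.
  intros hf hi Hz. replace z with (padd (p i) (psub z (p i))) by ptring. now apply hf.
Qed.

Lemma folded_arrays_agree (S B : pt -> Prop) d pS pB N s fS fB :
  lattice_tiling v1 v2 S -> S (0, 0) -> defines_folding v1 v2 S d ->
  folded_row v1 v2 S d pS -> folded_row v1 v2 B d pB ->
  (0 < N)%nat -> L (pscale (Z.of_nat N) d) ->
  folded_array v1 v2 pS N s fS -> folded_array v1 v2 pB N s fB ->
  forall y z, congr y z -> fS y = fB z.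
Proof.
  intros htS HS0 hfold hpS hpB hN HNd hfS hfB y z Hyz.
  destruct (tile_rep S htS y) as [a [Sa Hya]].
  destruct (hfold pS hpS a Sa) as [k Ek].
  set (r := (k mod N)%nat).
  assert (Hr : (r < N)%nat) by (apply Nat.mod_upper_bound; lia).
  assert (HyS : congr y (pS r))
    by (unfold r; rewrite (row_mod S d pS hpS N htS HS0 hN HNd), Ek; exact Hya).
  assert (HzB : congr z (pB r)).
  { apply (congr_trans _ _ _ (congr_sym _ _ Hyz)), (congr_trans _ _ _ HyS).
    apply (congr_trans _ _ _ (row_congr S d pS hpS r)), congr_sym, (row_congr B d pB hpB). }
  rewrite (folded_array_at pS N s fS r y), (folded_array_at pB N s fB r z); auto.
Qed.

Lemma window_transfer (A B : pt -> Prop) (f g : pt -> bool) k1 k2 :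
  lattice_tiling v1 v2 A -> lattice_tiling v1 v2 B ->
  (forall y z, congr y z -> f y = g z) ->
  window_property k1 k2 A f -> window_property k1 k2 B g.
Proof.
  intros htA htB hfg W M HM.
  assert (Hwin : forall x x', congr x x' ->
    forall r c, f (padd x (Z.of_nat r, Z.of_nat c)) = g (padd x' (Z.of_nat r, Z.of_nat c)))
    by (intros; now apply hfg, congr_padd).
  destruct (W M HM) as [x [[Ax Hx] Hu]].
  destruct (tile_rep B htB x) as [x' [Bx' Hxx']].
  exists x'. split.
  - split; [exact Bx'|]. intros r c hr hc. now rewrite <- Hwin with (x := x), Hx.
  - intros b [Bb Hb].
    destruct (tile_rep A htA b) as [a [Aa Hba]].
    assert (Ea : x = a).
    { apply Hu. split; [exact Aa|]. intros r c hr hc.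
      rewrite Hwin with (x' := b); [now apply Hb | now apply congr_sym]. }
    subst a. apply (tile_uniq B htB _ _ Bx' Bb).
    apply (congr_trans _ x); [now apply congr_sym | now apply congr_sym].
Qed.

End Lattice.

Lemma rect_enum (n1 n2 : nat) : (0 < n2)%nat ->
  exists T, NoDup T /\ length T = (n1 * n2)%nat /\ forall x, rect n1 n2 x <-> In x T.
Proof.
  intro h.
  exists (map (fun k => (Z.of_nat (k / n2), Z.of_nat (k mod n2))) (seq 0 (n1 * n2))).
  split; [|split].
  - apply FinFun.Injective_map_NoDup_in; [|apply seq_NoDup].
    intros a b _ _ E. injection E as E1 E2. apply Nat2Z.inj in E1, E2.
    rewrite (Nat.div_mod_eq a n2), (Nat.div_mod_eq b n2). lia.
  - now rewrite length_map, length_seq.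
  - intros [x y]. unfold rect; simpl. rewrite in_map_iff. split.
    + intros [[hx1 hx2] [hy1 hy2]].
      exists (Z.to_nat x * n2 + Z.to_nat y)%nat. split; [|apply in_seq; nia].
      assert (D : ((Z.to_nat x * n2 + Z.to_nat y) / n2 = Z.to_nat x)%nat)
        by (rewrite Nat.div_add_l, Nat.div_small by lia; lia).
      assert (Mo : ((Z.to_nat x * n2 + Z.to_nat y) mod n2 = Z.to_nat y)%nat)
        by (rewrite Nat.add_comm, Nat.Div0.mod_add, Nat.mod_small by lia; lia).
      rewrite D, Mo. f_equal; lia.
    + intros [k [E Hk]]. injection E as <- <-. apply in_seq in Hk.
      pose proof (Nat.mod_upper_bound k n2 ltac:(lia)).
      assert (k / n2 < n1)%nat by (apply Nat.Div0.div_lt_upper_bound; lia).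
      lia.
Qed.

Theorem mainTheorem11
  (k1 k2 n1 n2 : nat) (hk1 : (1 <= k1)%nat) (hk2 : (1 <= k2)%nat)
  (hn : (n1 * n2 = 2 ^ (k1 * k2) - 1)%nat)
  (hn1 : (1 < n1)%nat) (hn2 : (1 < n2)%nat) (hcop : Nat.gcd n1 n2 = 1%nat)
  (v1 v2 : pt) (hindep : lin_indep v1 v2)
  (S : pt -> Prop) (hS : is_shape S)
  (htA : lattice_tiling v1 v2 (rect n1 n2))
  (htS : lattice_tiling v1 v2 S)
  (d : pt) (hd : ternary_nonzero d)
  (hfold : defines_folding v1 v2 S d)
  (s : nat -> bool) (hs : m_sequence (k1 * k2) s)
  (pS pA : nat -> pt)
  (hpS : folded_row v1 v2 S d pS) (hpA : folded_row v1 v2 (rect n1 n2) d pA)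
  (fS fA : pt -> bool)
  (hfS : folded_array v1 v2 pS (2 ^ (k1 * k2) - 1) s fS)
  (hfA : folded_array v1 v2 pA (2 ^ (k1 * k2) - 1) s fA) :
  window_property k1 k2 S fS <-> window_property k1 k2 (rect n1 n2) fA.
Proof.
  rewrite <- hn in hfS, hfA.
  assert (HNd : in_lattice v1 v2 (pscale (Z.of_nat (n1 * n2)) d)).
  { destruct (rect_enum n1 n2 ltac:(lia)) as [T [hnd [hlen hT]]].
    rewrite <- hlen. exact (tile_size_period v1 v2 (rect n1 n2) T d htA hT hnd). }
  assert (agree : forall y z, congr v1 v2 y z -> fS y = fA z)
    by (apply (folded_arrays_agree v1 v2 S (rect n1 n2) d pS pA (n1 * n2) s);
        auto; [apply hS | nia]).
  split; apply (window_transfer v1 v2); auto.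
  intros y z Hyz. symmetry. now apply agree, congr_sym.
Qed.
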